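(* Let $s,t\ge0$ be integers. For each integer $m$ with $0\le m<q^{b-1}$ let $\Psi_m=\{(i,j)\in\mathbb{Z}^2:\ 0\le i<q^c-1,\ \ -t\le q^{a-1}N_b\,i-q^{b-1}N_c\,j+N_cm,\ \ -s-(q^c-1)q\le -q^ai+(q^c-1)j\}$. Then $$\#\Psi_m=\frac{(q^c+1)q}{2}+(q-1)\left\lfloor\frac{t+N_cm}{q^{b-1}}\right\rfloor+s,$$ and $$\sum_{m=0}^{q^{b-1}-1}\#\Psi_m=\frac12\left(q^{c+b-1}+q^{c+b}-q^c+q\right)+q^{b-1}s+(q-1)t.$$
   Context: $q$ is a power of a prime $p$, $b\ge1$ an integer, $a=b+1$, $c=a+b$, and $N_k=(q^k-1)/(q-1)$ for $k\ge1$. *)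

From mathcomp Require Import all_boot all_order all_algebra.
Set Implicit Arguments. Unset Strict Implicit. Unset Printing Implicit Defensive.
Import Order.TTheory GRing.Theory Num.Theory.

(* N_k = (q^k - 1)/(q - 1)  (an exact division for q >= 2) *)
Definition Nk (q k : nat) : nat := ((q ^ k - 1) %/ (q - 1))%N.

Definition Psi (q b s t m : nat) : pred (int * int) :=
  fun ij =>
    let a := b.+1 in
    let c := (a + b)%N in
    let i := ij.1 in
    let j := ij.2 in
    [&& (0 <= i)%R,
        (i < (q ^ c)%N%:Z - 1)%R,
        (- (t%:Z) <= (q ^ (a - 1))%N%:Z * (Nk q b)%:Z * i
                     - (q ^ (b - 1))%N%:Z * (Nk q c)%:Z * j
                     + (Nk q c)%:Z * m%:Z)%R
      & (- (s%:Z) - ((q ^ c)%N%:Z - 1) * q%:Z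
           <= - (q ^ a)%N%:Z * i + ((q ^ c)%N%:Z - 1) * j)%R].

Definition has_card (P : pred (int * int)) (n : nat) : Prop :=
  exists l : seq (int * int),
    [/\ uniq l, (forall x, (x \in l) = P x) & size l = n].

(* For fixed i the two inequalities defining Psi_m confine j to an interval
   lo i <= j <= hi i whose end points are floors of affine functions of i, with
   denominators N_c and q^c - 1 = (q - 1) N_c (the nested floor
   floor((t + N_c m) / q^(b-1)) appears because floor(floor(u / P) / N) is
   floor(u / (P N))).  The real end points differ by more than -1, so each
   interval has hi i - lo i + 1 >= 0 points, and #Psi_m is a sum of floors over
   0 <= i < q^c - 1.  Both the count and its sum over m then follow from the
   identity 2 sum_(i < M) floor((a i + x) / M) = (a - 1)(M - 1) + 2 x for a
   coprime to M, which holds because the residues of a i + x mod M run through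
   0, ..., M - 1; the needed coprimalities come from N_c = 1 + q N_b (1 + q^b). *)

From mathcomp Require Import all_boot all_order all_algebra.
From mathcomp Require Import zify ring lra.
Set Implicit Arguments. Unset Strict Implicit. Unset Printing Implicit Defensive.
Import Order.TTheory GRing.Theory Num.Theory.
Local Open Scope ring_scope.

Lemma sumz_iota (M : nat) : 2 * \sum_(0 <= i < M) i%:Z = M%:Z * (M%:Z - 1).
Proof.
elim: M => [|M IH]; first by rewrite big_geq.
by rewrite big_nat_recr //= mulrDr IH intS; ring.
Qed.

Lemma sum_modz_affine (a x : int) (M : nat) : (0 < M)%N -> coprimez a M ->
  \sum_(0 <= i < M) ((a * i%:Z + x) %% M%:Z)%Z = \sum_(0 <= i < M) i%:Z.
Proof.
move=> M_gt0 coprime_aM.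
pose r i := `|((a * i%:Z + x) %% M%:Z)%Z|%N.
have rE i : ((a * i%:Z + x) %% M%:Z)%Z = (r i)%:Z by rewrite gez0_abs ?modz_ge0 //; lia.
have r_lt i : (r i < M)%N by rewrite -ltz_nat -rE ltz_pmod.
have coprime_Ma : coprimez M a by rewrite coprimez_sym.
have r_inj : {in iota 0 M &, injective r}.
  move=> i j; rewrite !mem_iota !add0n => iM jM rij.
  have : (M%:Z %| i%:Z - j%:Z)%Z.
    rewrite -(Gauss_dvdzr _ coprime_Ma) mulrBr -eqz_mod_dvd.
    by rewrite -(eqz_modDr x) !rE rij.
  by rewrite -eqz_mod_dvd !modz_small => [/eqP[]| |]; lia.
have r_sub : {subset map r (iota 0 M) <= iota 0 M}.
  by move=> y /mapP[i _ ->]; rewrite mem_iota add0n r_lt.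
have r_uniq : uniq (map r (iota 0 M)) by rewrite map_inj_in_uniq ?iota_uniq.
have [_ r_onto] := uniq_min_size r_uniq r_sub (eq_leq (esym (size_map _ _))).
under eq_bigr do rewrite rE.
rewrite -!(big_map r xpredT (fun j => j%:Z)) /index_iota subn0.
by apply: perm_big; apply: uniq_perm; rewrite ?iota_uniq.
Qed.

Lemma sum_divz_affine (a x : int) (M : nat) : (0 < M)%N -> coprimez a M ->
  2 * \sum_(0 <= i < M) ((a * i%:Z + x) %/ M%:Z)%Z = (a - 1) * (M%:Z - 1) + 2 * x.
Proof.
move=> M_gt0 coprime_aM.
have M_neq0 : M%:Z != 0 by lia.
have division : a * \sum_(0 <= i < M) i%:Z + M%:Z * x =
    M%:Z * \sum_(0 <= i < M) ((a * i%:Z + x) %/ M%:Z)%Z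
    + \sum_(0 <= i < M) ((a * i%:Z + x) %% M%:Z)%Z.
  transitivity (\sum_(0 <= i < M) (a * i%:Z + x)).
    by rewrite big_split /= -big_distrr sumr_const_nat subn0 -mulr_natl natz.
  rewrite big_distrr -big_split /=; apply: eq_bigr => i _.
  by rewrite [M%:Z * _]mulrC -divz_eq.
rewrite sum_modz_affine // in division.
set S := \sum_(0 <= i < M) ((a * i%:Z + x) %/ M%:Z)%Z in division *.
set I := \sum_(0 <= i < M) i%:Z in division.
apply: (mulfI M_neq0).
have MS : M%:Z * S = a * I + M%:Z * x - I by rewrite division addrK.
have -> : M%:Z * (2 * S) = (a - 1) * (2 * I) + 2 * M%:Z * x by rewrite mulrCA MS; ring.
by rewrite sumz_iota; ring.
Qed.

Lemma sum_divz_affine_periods (a x : int) (M k : nat) : (0 < M)%N -> coprimez a M ->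
  2 * \sum_(0 <= i < (k * M)%N) ((a * i%:Z + x) %/ M%:Z)%Z =
  k%:Z * ((a - 1) * (M%:Z - 1) + 2 * x) + a * M%:Z * k%:Z * (k%:Z - 1).
Proof.
move=> M_gt0 coprime_aM.
have M_neq0 : M%:Z != 0 by lia.
elim: k => [|k IH]; first by rewrite mul0n big_geq //; ring.
rewrite mulSn addnC (@big_cat_nat _ _ _ (k * M)%N) ?leq_addr //= mulrDr IH.
have -> : \sum_((k * M)%N <= i < (k * M + M)%N) ((a * i%:Z + x) %/ M%:Z)%Z =
          \sum_(0 <= i < M) (a * k%:Z + ((a * i%:Z + x) %/ M%:Z)%Z).
  rewrite -{1}(add0n (k * M)%N) big_addn addKn; apply: eq_bigr => i _.
  have -> : a * (i + k * M)%N%:Z + x = a * k%:Z * M%:Z + (a * i%:Z + x).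
    by rewrite PoszD PoszM; ring.
  by rewrite divzMDl.
rewrite big_split /= sumr_const_nat subn0 [2 * (_ + _)]mulrDr sum_divz_affine //.
rewrite -mulr_natr natz intS; ring.
Qed.

Lemma divz_add_ge (x y : int) (d e : nat) : (0 < d)%N -> (0 < e)%N ->
  0 < x * e%:Z + y * d%:Z -> -1 <= (x %/ d%:Z)%Z + (y %/ e%:Z)%Z.
Proof.
move=> d_gt0 e_gt0 pos.
have de_gt0 : 0 < d%:Z * e%:Z by rewrite -PoszM ltz_nat muln_gt0 d_gt0.
have x_lt : x * e%:Z < ((x %/ d%:Z)%Z + 1) * d%:Z * e%:Z.
  by rewrite ltr_pM2r ?ltz_ceil ?ltz_nat.
have y_lt : y * d%:Z < ((y %/ e%:Z)%Z + 1) * d%:Z * e%:Z.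
  by rewrite -mulrA [_ * e%:Z]mulrC mulrA ltr_pM2r ?ltz_ceil ?ltz_nat.
have : 0 < ((x %/ d%:Z)%Z + (y %/ e%:Z)%Z + 2) * (d%:Z * e%:Z) by lia.
by rewrite pmulr_lgt0 //; lia.
Qed.

Lemma has_card_strip (P : pred (int * int)) (M : nat) (lo hi : int -> int) :
  (forall i j, P (i, j) = [&& 0 <= i, i < M%:Z, lo i <= j & j <= hi i]) ->
  (forall i : nat, (i < M)%N -> lo i%:Z <= hi i%:Z + 1) ->
  has_card P (\sum_(0 <= i < M) `|(hi i%:Z - lo i%:Z + 1)%R|%N).
Proof.
move=> PE lo_hi.
pose w (i : nat) := `|(hi i%:Z - lo i%:Z + 1)%R|%N.
have wE i : (i < M)%N -> (w i)%:Z = hi i%:Z - lo i%:Z + 1.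
  by move=> iM; rewrite gez0_abs //; have := lo_hi i iM; lia.
exists [seq (i%:Z, lo i%:Z + k%:Z) | i <- iota 0 M, k <- iota 0 (w i)]; split.
- apply: allpairs_uniq_dep => [|i _|[i1 k1] [i2 k2] _ _ [-> /addrI [->]]] //;
    exact: iota_uniq.
- move=> [i j]; rewrite PE; apply/allpairsPdep/idP => [[i' [k [+ + [-> ->]]]]|].
    rewrite !mem_iota !add0n => iM kw.
    have := wE _ iM; rewrite -ltz_nat in kw; lia.
  case/and4P=> i_ge0 iM lo_j j_hi.
  have iE : i = `|i|%N%:Z by rewrite gez0_abs.
  rewrite iE ltz_nat in iM.
  have j_lo : 0 <= j - lo i by rewrite subr_ge0.
  exists `|i|%N, `|j - lo i|%N; rewrite !mem_iota !add0n iM -iE gez0_abs //.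
  split=> //; last by rewrite [lo i + _]addrC subrK.
  by rewrite -ltz_nat (wE _ iM) -iE gez0_abs //; lia.
- rewrite size_allpairs_dep sumnE big_map /index_iota subn0.
  by apply: eq_bigr => i _; rewrite size_iota.
Qed.

Lemma has_card_unique (P : pred (int * int)) (n1 n2 : nat) :
  has_card P n1 -> has_card P n2 -> n1 = n2.
Proof.
move=> [l1 [uniq1 mem1 <-]] [l2 [uniq2 mem2 <-]].
by apply/perm_size/uniq_perm => // x; rewrite mem1 mem2.
Qed.

Lemma Nk_mul (q k : nat) : ((q - 1) * Nk q k = q ^ k - 1)%N.
Proof. by rewrite /Nk mulnC divnK // !subn1 dvdn_pred_predX. Qed.

Lemma dvdn2_expS_mul (n k : nat) : (0 < k)%N -> (2 %| (n ^ k + 1) * n)%N.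
Proof. by case: k => // k _; rewrite dvdn2 oddM oddD oddX; case: (odd n). Qed.

Lemma Posz_half (N : nat) (z : int) : 2 * z = N%:Z -> (N %/ 2)%N%:Z = z.
Proof.
move=> Nz; have z_ge0 : 0 <= z by lia.
have -> : N = (2 * `|z|)%N by apply/eqP; rewrite -eqz_nat PoszM gez0_abs // Nz.
by rewrite mulKn // gez0_abs.
Qed.

Section PsiCount.

Variables q b s t : nat.
Hypothesis q_gt1 : (1 < q)%N.
Hypothesis b_gt0 : (0 < b)%N.

Let c := (b.+1 + b)%N.
Let P := (q ^ (b - 1))%N.
Let Q := (q ^ b)%N.
Let C := (q ^ c)%N.
Let M := (C - 1)%N.
Let Nb := Nk q b.
Let Nc := Nk q c.

Let q1E : (q - 1)%N%:Z = q%:Z - 1.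
Proof. by rewrite -subzn 1?ltnW. Qed.

Let Q_eq : Q = (q * P)%N.
Proof. by rewrite /Q /P -expnS subn1 prednK. Qed.

Let C_eq : C = (q * Q * Q)%N.
Proof. by rewrite /C /c addSn expnS expnD mulnA. Qed.

Let Qz : Q%:Z = (q%:Z - 1) * Nb%:Z + 1.
Proof. by have := Nk_mul q b; rewrite -/Q -/Nb; lia. Qed.

Let M_eq : M = ((q - 1) * Nc)%N.
Proof. by rewrite Nk_mul. Qed.

Let MC : M%:Z = C%:Z - 1.
Proof. by rewrite /M C_eq; lia. Qed.

Let Cz : C%:Z = q%:Z * Q%:Z * Q%:Z.
Proof. by rewrite C_eq !PoszM. Qed.

Let Mz : M%:Z = (q%:Z - 1) * Nc%:Z.
Proof. by rewrite M_eq PoszM q1E. Qed.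

Let Ncz : Nc%:Z = 1 + q%:Z * Nb%:Z * (1 + Q%:Z).
Proof.
have q1_neq0 : q%:Z - 1 != 0 by lia.
by apply: (mulfI q1_neq0); rewrite -Mz MC Cz Qz; ring.
Qed.

Let P_gt0 : (0 < P)%N. Proof. by rewrite expn_gt0; lia. Qed.

Let Nc_gt0 : (0 < Nc)%N.
Proof. by rewrite -ltz_nat Ncz ltr_wpDr // !mulr_ge0. Qed.

Let M_gt0 : (0 < M)%N.
Proof. by rewrite -ltz_nat Mz mulr_gt0 ?ltz_nat //; lia. Qed.

Let y m := ((t + Nc * m) %/ P)%N.
Let hi m (i : int) := ((q%:Z * Nb%:Z * i + (y m)%:Z) %/ Nc%:Z)%Z.
Let lo (i : int) := - ((- (q * Q)%N%:Z * i + (s%:Z + M%:Z * q%:Z)) %/ M%:Z)%Z.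

Lemma Psi_strip m i j :
  Psi q b s t m (i, j) = [&& 0 <= i, i < M%:Z, lo i <= j & j <= hi m i].
Proof.
have hiE : hi m i = ((Q%:Z * Nb%:Z * i + Nc%:Z * m%:Z + t%:Z) %/ (P%:Z * Nc%:Z))%Z.
  have -> : Q%:Z * Nb%:Z * i + Nc%:Z * m%:Z + t%:Z
           = q%:Z * Nb%:Z * i * P%:Z + (t + Nc * m)%N%:Z.
    by rewrite Q_eq PoszM PoszD PoszM; ring.
  by rewrite divzMA_ge0 // divzMDl ?divz_nat //; lia.
rewrite /Psi /= subn1 /= -/c -/P -/Q -/Nb -/Nc -/C -MC expnS -/Q.
congr [&& _, _ & _]; rewrite andbC; congr (_ && _).
  by rewrite /lo lerNl lez_divRL ?ltz_nat //; apply/idP/idP; lia.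
by rewrite hiE lez_divRL ?pmulr_rgt0 ?ltz_nat //; apply/idP/idP; lia.
Qed.

Lemma Psi_width m (i : nat) : (i < M)%N -> lo i%:Z <= hi m i%:Z + 1.
Proof.
move=> iM.
have spread : 0 < q%:Z * (M%:Z - i%:Z) by rewrite mulr_gt0 ?subr_gt0 ?ltz_nat //; lia.
have y_ge0 : 0 <= (q%:Z - 1) * (y m)%:Z by rewrite mulr_ge0 //; lia.
have pos : 0 < (q%:Z * Nb%:Z * i%:Z + (y m)%:Z) * M%:Z
               + (- (q * Q)%N%:Z * i%:Z + (s%:Z + M%:Z * q%:Z)) * Nc%:Z.
  have -> : (q%:Z * Nb%:Z * i%:Z + (y m)%:Z) * M%:Z
            + (- (q * Q)%N%:Z * i%:Z + (s%:Z + M%:Z * q%:Z)) * Nc%:Z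
          = Nc%:Z * (q%:Z * (M%:Z - i%:Z) + (q%:Z - 1) * (y m)%:Z + s%:Z).
    by rewrite PoszM Mz Qz; ring.
  by rewrite pmulr_rgt0 ?ltz_nat //; lia.
by have := divz_add_ge Nc_gt0 M_gt0 pos; rewrite /lo /hi; lia.
Qed.

Lemma sum_Psi_widths m :
  2 * \sum_(0 <= i < M) (hi m i%:Z - lo i%:Z + 1)
  = (C%:Z + 1) * q%:Z + 2 * (q%:Z - 1) * (y m)%:Z + 2 * s%:Z.
Proof.
have coprime_hi : coprimez (q%:Z * Nb%:Z) Nc%:Z.
  by apply/coprimezP; exists (- (1 + Q%:Z), 1); rewrite /= Ncz; ring.
have coprime_lo : coprimez (- (q * Q)%N%:Z) M%:Z.
  by rewrite coprimeNz; apply/coprimezP; exists (Q%:Z, -1); rewrite /= MC Cz PoszM; ring.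
have sum_hi := sum_divz_affine_periods (y m) (q - 1) Nc_gt0 coprime_hi.
have sum_lo := sum_divz_affine (s%:Z + M%:Z * q%:Z) M_gt0 coprime_lo.
rewrite -M_eq in sum_hi.
rewrite !big_split /= sumr_const_nat subn0 !mulrDr sum_hi.
under eq_bigr do rewrite /lo opprK.
rewrite sum_lo PoszM q1E (natz M) Mz Cz Ncz Qz; ring.
Qed.

Let halfE : 2 * (((C + 1) * q) %/ 2)%N%:Z = (C%:Z + 1) * q%:Z.
Proof. by rewrite -[2]/(2%N%:Z) -PoszM mulnC divnK ?PoszM // /C dvdn2_expS_mul. Qed.

Lemma card_Psi m : has_card (Psi q b s t m) (((C + 1) * q) %/ 2 + (q - 1) * y m + s).
Proof.
have := has_card_strip (Psi_strip m) (@Psi_width m).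
congr has_card; apply/eqP; rewrite -eqz_nat eq_sym; apply/eqP.
rewrite (big_morph Posz PoszD (erefl 0%:Z)).
have -> : \sum_(0 <= i < M) `|(hi m i%:Z - lo i%:Z + 1)%R|%N%:Z
          = \sum_(0 <= i < M) (hi m i%:Z - lo i%:Z + 1).
  apply: eq_big_nat => i /andP[_ iM]; rewrite gez0_abs //.
  by have := Psi_width m iM; lia.
apply: (@mulfI _ 2) => //; rewrite sum_Psi_widths !PoszD PoszM q1E.
by rewrite !mulrDr halfE; ring.
Qed.

Lemma sum_card_Psi :
  (\sum_(0 <= m < P) (((C + 1) * q) %/ 2 + (q - 1) * y m + s))%N
  = ((q ^ (c + b - 1) + q ^ (c + b) - C + q) %/ 2 + P * s + (q - 1) * t)%N.
Proof.
have coprime_NcP : coprimez Nc%:Z P%:Z.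
  have -> : P%:Z = q%:Z ^+ (b - 1) by rewrite -natz natrX natz.
  apply/coprimezXr/coprimezP; exists (1, - (Nb%:Z * (1 + Q%:Z))).
  by rewrite /= Ncz; ring.
have sum_y := sum_divz_affine t%:Z P_gt0 coprime_NcP.
have yE m : (y m)%:Z = ((Nc%:Z * m%:Z + t%:Z) %/ P%:Z)%Z.
  by rewrite -divz_nat PoszD PoszM addrC.
have CP : (q ^ (c + b - 1))%N = (C * P)%N.
  by rewrite /C /P -expnD; congr expn; rewrite /c; lia.
have CQ : (q ^ (c + b))%N = (C * (q * P))%N by rewrite -Q_eq /C /Q -expnD.
have C_le : (C <= C * P + C * (q * P))%N by rewrite -mulnDr leq_pmulr // addn_gt0 P_gt0.
have Cqz : C%:Z = (q%:Z - 1) * Nc%:Z + 1 by rewrite -Mz MC; ring.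
apply/eqP; rewrite -eqz_nat; apply/eqP.
rewrite (big_morph Posz PoszD (erefl 0%:Z)) !PoszD !PoszM q1E.
under eq_bigr do rewrite !PoszD PoszM yE q1E.
rewrite !big_split /= !sumr_const_nat subn0 -big_distrr /= -(mulr_natl _ P) -(mulr_natl s%:Z P) natz.
have half_H0 := halfE.
set H0 := (((C + 1) * q) %/ 2)%N%:Z in half_H0 *.
set Y := \sum_(0 <= i < P) _ in sum_y *.
rewrite (@Posz_half _ (P%:Z * H0 + (q%:Z - 1) * Y - (q%:Z - 1) * t%:Z)); first ring.
rewrite CP CQ PoszD -subzn // !PoszD !PoszM.
have -> : 2 * (P%:Z * H0 + (q%:Z - 1) * Y - (q%:Z - 1) * t%:Z)
          = P%:Z * (2 * H0) + (q%:Z - 1) * (2 * Y) - 2 * (q%:Z - 1) * t%:Z by ring.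
by rewrite half_H0 sum_y Cqz; ring.
Qed.

End PsiCount.

Theorem lemma2 (q b s t : nat)
  (hq : exists p k : nat, [/\ prime p, (0 < k)%N & q = (p ^ k)%N])
  (hb : (1 <= b)%N) :
  let a := b.+1 in
  let c := (a + b)%N in
  (forall m : nat, (m < q ^ (b - 1))%N ->
     has_card (Psi q b s t m)
       (((q ^ c + 1) * q) %/ 2 + (q - 1) * ((t + Nk q c * m) %/ q ^ (b - 1)) + s)%N)
  /\
  (forall f : nat -> nat,
     (forall m : nat, (m < q ^ (b - 1))%N -> has_card (Psi q b s t m) (f m)) ->
     (\sum_(0 <= m < q ^ (b - 1)) f m)%N =
       ((q ^ (c + b - 1) + q ^ (c + b) - q ^ c + q) %/ 2
          + q ^ (b - 1) * s + (q - 1) * t)%N).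
Proof.
have q_gt1 : (1 < q)%N.
  by case: hq => p [k [p_prime k_gt0 ->]]; rewrite -(exp1n k) ltn_exp2r // prime_gt1.
move=> a c; split=> [m _|f card_f]; first exact: card_Psi.
rewrite -(@sum_card_Psi q b s t q_gt1 hb).
apply: eq_big_nat => m /andP[_ m_lt].
exact: has_card_unique (card_f m m_lt) (card_Psi _ _ q_gt1 hb m).
Qed.
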